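(* Let $A$ be a real $m\times n$ matrix with $\|A\|_\infty\le1$. Then there exist a sequence of partitions $\{\mathcal P_j\}_{j\ge1}$ of $\{1,\dots,m\}$ and a sequence of partitions $\{\mathcal Q_j\}_{j\ge1}$ of $\{1,\dots,n\}$ such that for each $j\ge1$: (1) $\mathcal P_{j+1}$ refines $\mathcal P_j$ and $\mathcal Q_{j+1}$ refines $\mathcal Q_j$; (2) $|\mathcal P_j|$ and $|\mathcal Q_j|$ are at most $(2^{j+2}j)^{j^2}$; (3) $\|A-A^{\mathcal P_j,\mathcal Q_j}\|_\Box\le 2j^{-1}+6j^32^{-j}$.
   Context: $\|A\|_\infty=\max|a_{ij}|$; $\|A\|_\Box=\frac1{mn}\max\{|x^TAy|:x\in\mathbb{R}^m,y\in\mathbb{R}^n,\|x\|_\infty\le1,\|y\|_\infty\le1\}$. For a partition $\mathcal P$ of the row indices and $\mathcal Q$ of the column indices, the blocks are the sets $S\times T$ with $S\in\mathcal P$, $T\in\mathcal Q$, and $A^{\mathcal P,\mathcal Q}$ is the matrix obtained from $A$ by replacing every entry in each block by the average of the entries of $A$ in that block. *)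

From HB Require Import structures.
From mathcomp Require Import all_boot all_order all_algebra.
From mathcomp Require Import classical_sets reals.
Set Implicit Arguments. Unset Strict Implicit. Unset Printing Implicit Defensive.
Import Order.TTheory GRing.Theory Num.Theory.
Local Open Scope ring_scope.
Local Open Scope classical_set_scope.

Definition entry_bounded (R : realType) m n (A : 'M[R]_(m, n)) (c : R) :=
  forall i j, `|A i j| <= c.

(* cut norm: (1/(mn)) * max { |x^T A y| : ||x||_oo <= 1, ||y||_oo <= 1 },
   the max (which exists) is written as a supremum. *)
Definition cutnorm (R : realType) m n (A : 'M[R]_(m, n)) : R :=
  sup [set r : R | exists (x : 'cV[R]_m) (y : 'cV[R]_n),
         (forall i, `|x i 0| <= 1) /\ (forall j, `|y j 0| <= 1) /\
         r = `|(x^T *m A *m y) 0 0| / (m * n)%:R].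

Definition refines (T : finType) (Q P : {set {set T}}) :=
  forall B, B \in Q -> exists2 C, C \in P & B \subset C.

Definition blockavg (R : realType) m n (P : {set {set 'I_m}}) (Q : {set {set 'I_n}})
  (A : 'M[R]_(m, n)) : 'M[R]_(m, n) :=
  \matrix_(i, k)
    ((\sum_(a | a \in finset.pblock P i) \sum_(b | b \in finset.pblock Q k) A a b) /
     (#|finset.pblock P i| * #|finset.pblock Q k|)%:R).

(* Greedy energy increment, as in the weak regularity lemma of Frieze and Kannan.
   Choose rectangles S_1 x T_1, S_2 x T_2, ... greedily: S_(t+1) x T_(t+1)
   maximises the discrepancy D_t = |<A - E_t A, 1_(S x T)>|, where E_t A averages A
   over the blocks of the partition generated by the first t rectangles.  The
   indicator of the new rectangle is constant on the blocks of stage t+1, so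
   Cauchy-Schwarz and Pythagoras give D_t^2 <= mn (|E_(t+1) A|^2 - |E_t A|^2); the
   energies |E_t A|^2 lie in [0, mn], hence sum_t D_t^2 <= (mn)^2 and some t < 4 j^2
   has D_t <= mn / (2j).  Splitting x and y by sign bounds the cut norm of A - E_t A
   by 4 D_t / (mn) <= 2 / j, which is stronger than the bound claimed.  Taking for
   t_j the first such step below (j + 2) j^2 makes t_j nondecreasing in j, so the
   partitions are nested, and each has at most 2^(t_j) blocks. *)

From HB Require Import structures.
From mathcomp Require Import all_boot all_order all_algebra.
From mathcomp Require Import classical_sets reals.
From mathcomp Require Import lra zify.
Set Implicit Arguments. Unset Strict Implicit. Unset Printing Implicit Defensive.
Import Order.TTheory GRing.Theory Num.Theory.
Local Open Scope ring_scope.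

Section Fibers.
Variables (T : finType) (X : eqType) (f : T -> X).

Definition fiber (i : T) : {set T} := [set a | f a == f i].

Lemma mem_fiber i : i \in fiber i.
Proof. by rewrite inE. Qed.

Lemma fiber_sym i a : (a \in fiber i) = (i \in fiber a).
Proof. by rewrite !inE eq_sym. Qed.

Lemma fiber_eq i a : a \in fiber i -> fiber a = fiber i.
Proof. by rewrite inE => /eqP e; apply/setP => b; rewrite !inE e. Qed.

Lemma card_fiber_gt0 i : (0 < #|fiber i|)%N.
Proof. by apply/card_gt0P; exists i; rewrite mem_fiber. Qed.

Lemma sum_fiber_mean (R : numFieldType) (F : T -> R) :
  \sum_i \sum_(a in fiber i) F a / #|fiber a|%:R = \sum_a F a.
Proof.
rewrite (exchange_big_dep xpredT) //=; apply: eq_bigr => a _.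
under eq_bigl => i do rewrite fiber_sym.
by rewrite sumr_const -[_ *+ _]mulr_natr divfK // pnatr_eq0 -lt0n card_fiber_gt0.
Qed.

End Fibers.

Definition finer (T : Type) (X Y : eqType) (f' : T -> Y) (f : T -> X) :=
  forall a a', f' a = f' a' -> f a = f a'.

Lemma finer_map_cat (T P : Type) (Y : eqType) (h : T -> P -> Y) (s r : seq P) :
  finer (fun a => map (h a) (s ++ r)) (fun a => map (h a) s).
Proof.
move=> a a' /(congr1 (take (size s))).
by rewrite !map_cat !take_size_cat ?size_map.
Qed.

Section MatrixDot.
Variables (R : realFieldType) (m n : nat).
Implicit Types (X Y Z : 'M[R]_(m, n)).

Definition mxdot X Y := \sum_i \sum_k X i k * Y i k.

Lemma mxdotC X Y : mxdot X Y = mxdot Y X.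
Proof. by apply: eq_bigr => i _; apply: eq_bigr => k _; rewrite mulrC. Qed.

Lemma mxdotBl X Y Z : mxdot (X - Y) Z = mxdot X Z - mxdot Y Z.
Proof.
rewrite /mxdot -sumrB; apply: eq_bigr => i _; rewrite -sumrB.
by apply: eq_bigr => k _; rewrite !mxE mulrBl.
Qed.

Lemma mxdotBr X Y Z : mxdot Z (X - Y) = mxdot Z X - mxdot Z Y.
Proof. by rewrite mxdotC mxdotBl !(mxdotC Z). Qed.

Lemma mxdotZl a X Y : mxdot (a *: X) Y = a * mxdot X Y.
Proof.
rewrite /mxdot mulr_sumr; apply: eq_bigr => i _; rewrite mulr_sumr.
by apply: eq_bigr => k _; rewrite mxE mulrA.
Qed.

Lemma mxdotZr a X Y : mxdot Y (a *: X) = a * mxdot Y X.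
Proof. by rewrite mxdotC mxdotZl mxdotC. Qed.

Lemma mxdot_ge0 X : 0 <= mxdot X X.
Proof. by do 2![apply: sumr_ge0 => ? _]; rewrite -expr2 sqr_ge0. Qed.

Lemma mxdot_eq0 X : mxdot X X = 0 -> X = 0.
Proof.
have sq_ge0 (x : R) : 0 <= x * x by rewrite -expr2 sqr_ge0.
move=> X0; apply/matrixP => i k; rewrite mxE.
have rows0 := psumr_eq0P (fun i _ => sumr_ge0 _ (fun k _ => sq_ge0 (X i k))) X0.
have /(_ k isT)/eqP := psumr_eq0P (fun k _ => sq_ge0 (X i k)) (rows0 i isT).
by rewrite mulf_eq0 orbb => /eqP.
Qed.

Lemma mxdot_CauchySchwarz X Y : mxdot X Y ^+ 2 <= mxdot X X * mxdot Y Y.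
Proof.
set a := mxdot Y Y; set b := mxdot X Y; set c := mxdot X X.
have [/mxdot_eq0 Y0 | a_neq0] := eqVneq a 0.
  have -> : b = 0.
    by rewrite /b Y0 /mxdot big1 // => i _; rewrite big1 // => k _; rewrite mxE mulr0.
  by rewrite expr0n mulr_ge0 ?mxdot_ge0.
have a_gt0 : 0 < a by rewrite lt_def a_neq0 mxdot_ge0.
have := mxdot_ge0 (a *: X - b *: Y).
rewrite !mxdotBl !mxdotBr !mxdotZl !mxdotZr -/a -/b -/c (mxdotC Y X) -/b => h.
have : 0 <= a * (c * a - b ^+ 2) by rewrite expr2; nra.
by rewrite pmulr_rge0 // subr_ge0 mulrC.
Qed.

Lemma mxdot_le_card Y : (forall i k, `|Y i k| <= 1) -> mxdot Y Y <= (m * n)%:R.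
Proof.
move=> Y1; apply: (@le_trans _ _ (\sum_(i < m) \sum_(k < n) (1 : R))).
  do 2![apply: ler_sum => ? _]; rewrite -expr2 -real_normK ?num_real //.
  by rewrite expr_le1 ?Y1.
by rewrite !sumr_const !card_ord -mulrnA mulnC.
Qed.

End MatrixDot.

Section BlockMean.
Variables (R : realFieldType) (m n : nat).
Implicit Types (U V : eqType) (X Y : 'M[R]_(m, n)).

Definition blockmean U V (f : 'I_m -> U) (g : 'I_n -> V) X : 'M[R]_(m, n) :=
  \matrix_(i, k) ((\sum_(a in fiber f i) \sum_(b in fiber g k) X a b) /
                  (#|fiber f i| * #|fiber g k|)%:R).

Definition block_const U V (f : 'I_m -> U) (g : 'I_n -> V) X :=
  forall a a' b b', f a = f a' -> g b = g b' -> X a b = X a' b'.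

Definition rectmx (S : {set 'I_m}) (T : {set 'I_n}) : 'M[R]_(m, n) :=
  \matrix_(i, k) ((i \in S) && (k \in T))%:R.

Lemma blockmean_const U V (f : 'I_m -> U) (g : 'I_n -> V) X :
  block_const f g (blockmean f g X).
Proof.
move=> a a' b b' fa gb; rewrite !mxE.
have -> : fiber f a = fiber f a' by apply/setP => c; rewrite !inE fa.
by have -> : fiber g b = fiber g b' by apply/setP => c; rewrite !inE gb.
Qed.

Lemma block_const_finer U V U' V' (f : 'I_m -> U) (g : 'I_n -> V)
    (f' : 'I_m -> U') (g' : 'I_n -> V') X :
  finer f' f -> finer g' g -> block_const f g X -> block_const f' g' X.
Proof. by move=> ff gg cX a a' b b' /ff fa /gg gb; apply: cX. Qed.

Lemma mxdot_blockmean U V (f : 'I_m -> U) (g : 'I_n -> V) X Y :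
  block_const f g Y -> mxdot (blockmean f g X) Y = mxdot X Y.
Proof.
move=> cY.
have termE i k : blockmean f g X i k * Y i k =
    \sum_(a in fiber f i) \sum_(b in fiber g k)
      X a b * Y a b / #|fiber f a|%:R / #|fiber g b|%:R.
  rewrite mxE natrM invfM mulrA !mulr_suml; apply: eq_bigr => a ai.
  rewrite !mulr_suml; apply: eq_bigr => b bk; rewrite (fiber_eq ai) (fiber_eq bk).
  move: ai bk; rewrite !inE => /eqP fa /eqP gb.
  by rewrite (cY a i b k) // mulrAC [X a b * _ * _]mulrAC.
rewrite /mxdot; under eq_bigr => i _ do under eq_bigr => k _ do rewrite termE.
under eq_bigr => i _ do rewrite exchange_big /=.
under eq_bigr => i _ do under eq_bigr => a _ do rewrite sum_fiber_mean -mulr_suml.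
by rewrite sum_fiber_mean.
Qed.

Lemma mxdot_blockmean_sub U V U' V' (f : 'I_m -> U) (g : 'I_n -> V)
    (f' : 'I_m -> U') (g' : 'I_n -> V') X :
  finer f' f -> finer g' g ->
  let E := blockmean f g X in let E' := blockmean f' g' X in
  mxdot (E' - E) (E' - E) = mxdot E' E' - mxdot E E.
Proof.
move=> ff gg E E'.
have cE : block_const f g E := blockmean_const X.
have cE' : block_const f' g' E := block_const_finer ff gg cE.
rewrite !mxdotBl !mxdotBr (mxdotC E E') (mxdot_blockmean X cE) (mxdot_blockmean X cE').
by rewrite subrr subr0.
Qed.

Lemma blockmean_bounded U V (f : 'I_m -> U) (g : 'I_n -> V) X c :
  (forall i k, `|X i k| <= c) -> forall i k, `|blockmean f g X i k| <= c.
Proof.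
move=> Xc i k; rewrite mxE normrM normfV normr_nat.
rewrite ler_pdivrMr ?ltr0n ?muln_gt0 ?card_fiber_gt0 //.
apply: (le_trans (ler_norm_sum _ _ _)).
apply: (@le_trans _ _ (\sum_(a in fiber f i) \sum_(b in fiber g k) c)).
  apply: ler_sum => a _; apply: (le_trans (ler_norm_sum _ _ _)).
  by apply: ler_sum => b _.
by rewrite !sumr_const -mulrnA mulr_natr mulnC.
Qed.

Lemma mxdot_rectmx X S T : mxdot X (rectmx S T) = \sum_(i in S) \sum_(k in T) X i k.
Proof.
rewrite /mxdot [RHS]big_mkcond; apply: eq_bigr => i _ /=.
have [iS | iS] := boolP (i \in S); last first.
  by rewrite big1 // => k _; rewrite mxE (negbTE iS) mulr0.
rewrite [RHS]big_mkcond; apply: eq_bigr => k _; rewrite mxE iS /=.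
by case: (k \in T); rewrite ?mulr1 ?mulr0.
Qed.

Lemma rect_discrepancy_sq_le U V U' V' (f : 'I_m -> U) (g : 'I_n -> V)
    (f' : 'I_m -> U') (g' : 'I_n -> V') X S T :
  finer f' f -> finer g' g -> block_const f' g' (rectmx S T) ->
  mxdot (X - blockmean f g X) (rectmx S T) ^+ 2 <=
  (m * n)%:R * (mxdot (blockmean f' g' X) (blockmean f' g' X) -
                mxdot (blockmean f g X) (blockmean f g X)).
Proof.
move=> ff gg cST.
rewrite mxdotBl -(mxdot_blockmean X cST) -mxdotBl -(mxdot_blockmean_sub X ff gg).
apply: le_trans (mxdot_CauchySchwarz _ _) _; rewrite mulrC ler_wpM2r ?mxdot_ge0 //.
by apply: mxdot_le_card => i k; rewrite mxE; case: (_ && _); rewrite ?normr1 ?normr0.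
Qed.

End BlockMean.

Section CutBounds.
Variable R : realFieldType.

Lemma norm_sum_le_subset (T : finType) (w y : T -> R) : (forall k, `|y k| <= 1) ->
  exists U : {set T}, `|\sum_k w k * y k| <= 2 * `|\sum_(k in U) w k|.
Proof.
move=> y1; set P := [set k | 0 <= w k].
have sum_absE : \sum_k `|w k| = \sum_(k in P) w k - \sum_(k in ~: P) w k.
  rewrite (bigID (mem P)) /= -sumrN; congr (_ + _); apply: eq_big => k;
    rewrite ?inE // => wk.
  - by rewrite ger0_norm.
  - by rewrite ltr0_norm // ltNge.
have : `|\sum_k w k * y k| <= \sum_k `|w k|.
  apply: le_trans (ler_norm_sum _ _ _) _; apply: ler_sum => k _.
  by rewrite normrM ler_piMr.
rewrite sum_absE.
have := ler_norm (\sum_(k in P) w k).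
have := ler_norm (- \sum_(k in ~: P) w k); rewrite normrN.
have [le_PC | le_CP] := lerP `|\sum_(k in P) w k| `|\sum_(k in ~: P) w k|.
- by exists (~: P); lra.
- by exists P; lra.
Qed.

Lemma bilinear_mxE m n (x : 'cV[R]_m) (B : 'M[R]_(m, n)) (y : 'cV[R]_n) :
  (x^T *m B *m y) 0 0 = \sum_k (\sum_i x i 0 * B i k) * y k 0.
Proof.
rewrite mxE; apply: eq_bigr => k _; rewrite mxE; congr (_ * _).
by apply: eq_bigr => i _; rewrite mxE.
Qed.

Lemma bilinear_le_rect m n (x : 'cV[R]_m) (B : 'M[R]_(m, n)) (y : 'cV[R]_n) D :
  (forall i, `|x i 0| <= 1) -> (forall k, `|y k 0| <= 1) ->
  (forall (S : {set 'I_m}) (T : {set 'I_n}), `|\sum_(i in S) \sum_(k in T) B i k| <= D) ->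
  `|(x^T *m B *m y) 0 0| <= 4 * D.
Proof.
move=> x1 y1 BD; rewrite bilinear_mxE.
have [T xBT] := norm_sum_le_subset (fun k => \sum_i x i 0 * B i k) y1.
have xBTE : \sum_(k in T) \sum_i x i 0 * B i k = \sum_i (\sum_(k in T) B i k) * x i 0.
  rewrite exchange_big /=; apply: eq_bigr => i _; rewrite mulr_suml.
  by apply: eq_bigr => k _; rewrite mulrC.
rewrite /= xBTE in xBT.
have [S BST] := norm_sum_le_subset (fun i => \sum_(k in T) B i k) x1.
have := BD S T; lra.
Qed.

Lemma bilinear_le_entry m n (x : 'cV[R]_m) (B : 'M[R]_(m, n)) (y : 'cV[R]_n) c :
  (forall i, `|x i 0| <= 1) -> (forall k, `|y k 0| <= 1) ->
  (forall i k, `|B i k| <= c) -> `|(x^T *m B *m y) 0 0| <= c * (m * n)%:R.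
Proof.
move=> x1 y1 Bc; rewrite bilinear_mxE.
apply: (le_trans (ler_norm_sum _ _ _)).
apply: (@le_trans _ _ (\sum_(k < n) \sum_(i < m) c)).
  apply: ler_sum => k _; rewrite mulr_suml.
  apply: (le_trans (ler_norm_sum _ _ _)); apply: ler_sum => i _.
  rewrite !normrM -[c]mul1r -[1 * c]mulr1.
  by apply: ler_pM; rewrite ?mulr_ge0 // ler_pM.
by rewrite !sumr_const !card_ord -mulrnA mulr_natr mulnC.
Qed.

End CutBounds.

Section CutNorm.
Variables (R : realType) (m n : nat).

Lemma cutnorm_le (B : 'M[R]_(m, n)) c :
  (forall (x : 'cV[R]_m) (y : 'cV[R]_n), (forall i, `|x i 0| <= 1) ->
     (forall k, `|y k 0| <= 1) -> `|(x^T *m B *m y) 0 0| <= c) ->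
  cutnorm B <= c / (m * n)%:R.
Proof.
move=> Bc; apply: ge_sup.
  exists 0, 0, 0; split; first by move=> i; rewrite mxE normr0.
  split; first by move=> i; rewrite mxE normr0.
  by rewrite mulmx0 mxE normr0 mul0r.
by move=> _ [x [y [x1 [y1 ->]]]]; rewrite ler_wpM2r ?invr_ge0 ?ler0n ?Bc.
Qed.

Lemma cutnorm_le_entry (B : 'M[R]_(m, n)) c :
  0 <= c -> (forall i k, `|B i k| <= c) -> cutnorm B <= c.
Proof.
move=> c0 Bc; apply: le_trans (cutnorm_le (c := c * (m * n)%:R) _) _.
  by move=> x y x1 y1; apply: bilinear_le_entry.
have [-> | mn0] := eqVneq (m * n)%:R (0 : R); first by rewrite invr0 mulr0.
by rewrite mulfK.
Qed.

End CutNorm.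

Lemma leq_find_cat (T : Type) (a : pred T) (s1 s2 : seq T) :
  (find a s1 <= find a (s1 ++ s2))%N.
Proof. by rewrite find_cat; case: ifP => // /negbT/hasNfind ->; apply: leq_addr. Qed.

Section Greedy.
Variables (R : realType) (m n : nat) (A : 'M[R]_(m, n)).
Hypothesis A1 : forall i k, `|A i k| <= 1.

Local Notation mn := ((m * n)%:R : R).
Local Notation rect := ({set 'I_m} * {set 'I_n})%type.

(* Rows (columns) with equal signatures lie in the same cells of all rectangles
   of [s]: the signatures label the partition generated by [s]. *)
Definition row_sig (s : seq rect) (i : 'I_m) := [seq i \in p.1 | p : rect <- s].
Definition col_sig (s : seq rect) (k : 'I_n) := [seq k \in p.2 | p : rect <- s].
Definition greedy_mean s := blockmean (row_sig s) (col_sig s) A.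

Definition discrepancy s (p : rect) := `|mxdot (A - greedy_mean s) (rectmx R p.1 p.2)|.
Definition worst_rect s := [arg max_(p > (finset.set0, finset.set0)) discrepancy s p]%O.

Fixpoint greedy t := if t is t'.+1 then rcons (greedy t') (worst_rect (greedy t')) else [::].

Definition gap t := discrepancy (greedy t) (worst_rect (greedy t)).
Definition energy t := mxdot (greedy_mean (greedy t)) (greedy_mean (greedy t)).

Lemma discrepancy_le_worst s p : discrepancy s p <= discrepancy s (worst_rect s).
Proof. by rewrite /worst_rect; case: arg_maxP => //= q _; apply. Qed.

Lemma greedy_cat t t' : (t <= t')%N -> exists r, greedy t' = greedy t ++ r.
Proof.
move=> /subnK <-; elim: (t' - t)%N => [|d [r rE]]; first by exists [::]; rewrite cats0.
by exists (rcons r (worst_rect (greedy (d + t)))); rewrite addSn /= rE rcons_cat.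
Qed.

Lemma size_greedy t : size (greedy t) = t.
Proof. by elim: t => //= t IH; rewrite size_rcons IH. Qed.

Lemma finer_row_sig s r : finer (row_sig (s ++ r)) (row_sig s).
Proof. exact: finer_map_cat. Qed.

Lemma finer_col_sig s r : finer (col_sig (s ++ r)) (col_sig s).
Proof. exact: finer_map_cat. Qed.

Lemma rect_block_const_rcons s (p : rect) :
  block_const (row_sig (rcons s p)) (col_sig (rcons s p)) (rectmx R p.1 p.2).
Proof.
move=> a a' b b'; rewrite /row_sig /col_sig !map_rcons.
by move=> /rcons_inj[_ fa] /rcons_inj[_ gb]; rewrite !mxE fa gb.
Qed.

Lemma gap_sq_le t : gap t ^+ 2 <= mn * (energy t.+1 - energy t).
Proof.
rewrite /gap /discrepancy real_normK ?num_real //=.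
rewrite /energy /= -cats1; apply: rect_discrepancy_sq_le.
- exact: finer_row_sig.
- exact: finer_col_sig.
- by rewrite cats1; apply: rect_block_const_rcons.
Qed.

Lemma energy_bounds t : 0 <= energy t <= mn.
Proof. by rewrite mxdot_ge0 mxdot_le_card //; apply: blockmean_bounded. Qed.

Lemma sum_gap_sq_le N : \sum_(0 <= t < N) gap t ^+ 2 <= mn * mn.
Proof.
have telescope K : \sum_(0 <= t < K) gap t ^+ 2 <= mn * (energy K - energy 0).
  elim: K => [|K IH]; first by rewrite big_nil subrr mulr0.
  by rewrite big_nat_recr //=; have := gap_sq_le K; nra.
apply: le_trans (telescope N) _; rewrite ler_wpM2l ?ler0n //.
by have := energy_bounds N; have := energy_bounds 0; lra.
Qed.

Definition regular j t := 2 * j%:R * gap t <= mn.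

Lemma exists_regular j : (0 < j)%N -> exists2 t, (t < 4 * j ^ 2)%N & regular j t.
Proof.
move=> j0; have [/hasP[t] | /hasPn irregular] := boolP (has (regular j) (iota 0 (4 * j ^ 2))).
  by rewrite mem_iota => /andP[_ t_lt] reg; exists t.
exfalso.
have : \sum_(0 <= t < 4 * j ^ 2) mn ^+ 2 < \sum_(0 <= t < 4 * j ^ 2) (2 * j%:R * gap t) ^+ 2.
  apply: ltr_sum_nat => [|t /andP[_ t_lt]]; first by rewrite muln_gt0 expn_gt0 j0.
  have := irregular t; rewrite mem_iota t_lt /regular -ltNge => /(_ isT) lt.
  by have := ler0n R (m * n); nra.
under [X in _ < X]eq_bigr => t _ do rewrite exprMn.
rewrite sumr_const_nat subn0 -mulr_sumr -[_ *+ _]mulr_natr [(4 * _)%:R]natrM natrX.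
have := sum_gap_sq_le (4 * j ^ 2); have j_gt0 : 0 < j%:R :> R by rewrite ltr0n.
nra.
Qed.

Lemma cutnorm_greedy_le2 t : cutnorm (A - greedy_mean (greedy t)) <= 2.
Proof.
apply: cutnorm_le_entry => // i k.
have := blockmean_bounded (row_sig (greedy t)) (col_sig (greedy t)) A1 i k.
rewrite !mxE => E1; apply: le_trans (ler_normB _ _) _.
by have := A1 i k; lra.
Qed.

Lemma cutnorm_regular j t : (0 < j)%N -> regular j t ->
  cutnorm (A - greedy_mean (greedy t)) <= 2 / j%:R.
Proof.
move=> j0 reg; apply: le_trans (cutnorm_le (c := 4 * gap t) _) _.
  move=> x y x1 y1; apply: bilinear_le_rect => // S T.
  by rewrite -mxdot_rectmx; apply: (discrepancy_le_worst _ (S, T)).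
have j_gt0 : 0 < j%:R :> R by rewrite ltr0n.
have [-> | mn0] := eqVneq mn 0; first by rewrite invr0 mulr0 divr_ge0.
have mn_gt0 : 0 < mn by rewrite lt_def mn0 ler0n.
rewrite ler_pdivrMr // mulrAC ler_pdivlMr //.
by move: reg; rewrite /regular; have : 0 <= gap t := normr_ge0 _; nra.
Qed.

(* For j >= 2 the window (j + 2) j^2 exceeds 4 j^2, and 2^((j + 2) j^2) fits the
   block count; for j = 1 the trivial bound [cutnorm_greedy_le2] is used instead. *)
Definition regular_step j := find (regular j) (iota 0 ((j + 2) * j ^ 2)).

Lemma regular_step_le j : (regular_step j <= (j + 2) * j ^ 2)%N.
Proof. by rewrite -[X in (_ <= X)%N](size_iota 0) find_size. Qed.

Lemma regular_step_pow_le j : (0 < j)%N ->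
  (2 ^ regular_step j <= (2 ^ (j + 2) * j) ^ (j ^ 2))%N.
Proof.
move=> j0; apply: leq_trans (leq_pexp2l _ (regular_step_le j)) _ => //.
by rewrite expnM leq_exp2r ?expn_gt0 ?j0 // leq_pmulr.
Qed.

Lemma regular_step_mono j : (regular_step j <= regular_step j.+1)%N.
Proof.
have le_cap : ((j + 2) * j ^ 2 <= (j.+1 + 2) * j.+1 ^ 2)%N by nia.
rewrite /regular_step -(subnKC le_cap) iotaD.
apply: leq_trans (leq_find_cat _ _ _) (sub_find _ _) => t.
by rewrite /regular -addn1 natrD; have : 0 <= gap t := normr_ge0 _; nra.
Qed.

Lemma cutnorm_regular_step j : (0 < j)%N ->
  cutnorm (A - greedy_mean (greedy (regular_step j))) <= 2 / j%:R.
Proof.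
move=> j0; have [j_gt1 | j_le1] := ltnP 1 j; last first.
  have -> : j = 1%N by lia.
  by rewrite divr1 cutnorm_greedy_le2.
apply: cutnorm_regular => //; set N := ((j + 2) * j ^ 2)%N.
have [t t_lt reg] := exists_regular j0.
have has_reg : has (regular j) (iota 0 N).
  by apply/hasP; exists t; rewrite // mem_iota /= (leq_trans t_lt) // /N; nia.
have := nth_find 0 has_reg; rewrite nth_iota //.
by rewrite -[X in (_ < X)%N](size_iota 0) -has_find.
Qed.

End Greedy.

Section PreimPartition.
Variable T : finType.

Lemma pblock_preim_partition (X : eqType) (f : T -> X) i :
  finset.pblock (preim_partition f [set: T]) i = fiber f i.
Proof.
apply/setP => a; rewrite pblock_equivalence_partition ?inE //.
by move=> x y z _ _ _; split => // /eqP ->.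
Qed.

Lemma refines_preim_partition (X Y : eqType) (f : T -> X) (f' : T -> Y) :
  finer f' f -> refines (preim_partition f' [set: T]) (preim_partition f [set: T]).
Proof.
move=> ff B /imsetP[x _ ->].
exists [set y in [set: T] | f x == f y]; first by apply: imset_f; rewrite inE.
by apply/fintype.subsetP => y; rewrite !inE /= => /eqP /ff ->.
Qed.

Lemma card_preim_partition_seq (f : T -> seq bool) N :
  (forall x, size (f x) = N) -> (#|preim_partition f [set: T]| <= 2 ^ N)%N.
Proof.
move=> size_f; pose block (u : N.-tuple bool) := [set y | val u == f y].
have sub : preim_partition f [set: T] \subset block @: [set: N.-tuple bool].
  apply/fintype.subsetP => B /imsetP[x _ ->]; apply/imsetP.
  exists (Tuple (introT eqP (size_f x))); first by rewrite inE.
  by apply/setP => y; rewrite !inE.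
apply: leq_trans (subset_leq_card sub) _; apply: leq_trans (leq_imset_card _ _) _.
by rewrite cardsT card_tuple card_bool.
Qed.

End PreimPartition.

Lemma blockavg_preim_partition (R : realType) m n (U V : eqType)
    (f : 'I_m -> U) (g : 'I_n -> V) (A : 'M[R]_(m, n)) :
  blockavg (preim_partition f [set: 'I_m]) (preim_partition g [set: 'I_n]) A =
  blockmean f g A.
Proof. by apply/matrixP => i k; rewrite !mxE !pblock_preim_partition. Qed.

Theorem lemma10p1 (R : realType) (m n : nat) (A : 'M[R]_(m, n)) :
  entry_bounded A 1 ->
  exists (P : nat -> {set {set 'I_m}}) (Q : nat -> {set {set 'I_n}}),
    forall j : nat, (0 < j)%N ->
      [/\ finset.partition (P j) [set: 'I_m], finset.partition (Q j) [set: 'I_n],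
          refines (P j.+1) (P j) /\ refines (Q j.+1) (Q j),
          (#|P j| <= (2 ^ (j + 2) * j) ^ (j ^ 2))%N /\
          (#|Q j| <= (2 ^ (j + 2) * j) ^ (j ^ 2))%N &
          cutnorm (A - blockavg (P j) (Q j) A) <=
            2 / j%:R + 6 * j%:R ^+ 3 / 2%:R ^+ j].
Proof.
move=> A1; set s := fun j => greedy A (regular_step A j).
exists (fun j => preim_partition (row_sig (s j)) [set: 'I_m]).
exists (fun j => preim_partition (col_sig (s j)) [set: 'I_n]).
move=> j j0; have [r sE] := greedy_cat A (regular_step_mono A j).
split; try exact: preim_partitionP.
- by split; apply: refines_preim_partition; rewrite /s sE;
    [apply: finer_row_sig | apply: finer_col_sig].
- by split; apply: leq_trans (regular_step_pow_le A j0);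
    apply: card_preim_partition_seq => x; rewrite size_map size_greedy.
rewrite blockavg_preim_partition; apply: le_trans (cutnorm_regular_step A1 j0) _.
by rewrite lerDl divr_ge0 ?mulr_ge0 ?exprn_ge0 ?ler0n.
Qed.
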